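(* Let $T$ be a tree of order $n \geq 4$ which is not the star $S_n$ and not one of the paths $P_4$, $P_5$, $P_6$. Then $$|E(\Lambda(T))| \geq \tfrac{1}{2}\, n\,(n - D(T)).$$
   Context: All graphs are simple and finite. For a graph $G$ and disjoint $X, Y \subseteq V(G)$, $E(X,Y)$ denotes the set of edges with one endpoint in $X$ and the other in $Y$. An ordered pair $(X,Y)$ of disjoint subsets of $V(G)$ with $|X|=|Y|=2$ is an odd pair of $G$ if $|E(X,Y)|$ is odd. A $2$-subset $\{u,v\}\subseteq V(G)$ is an odd set if it is the first component of some odd pair of $G$. The graph $\Lambda(G)$ has vertex set $V(G)$, and $uv$ is an edge of $\Lambda(G)$ iff $\{u,v\}$ is an odd set of $G$. For a tree $T$, $D(T)$ denotes the maximum, over vertices $w$ of $T$, of the number of leaves of $T$ adjacent to $w$. $S_n$ is the star and $P_k$ the path on $k$ vertices. *)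

From mathcomp Require Import all_boot.
Set Implicit Arguments. Unset Strict Implicit. Unset Printing Implicit Defensive.

Definition simple_graph (T : finType) (e : rel T) : Prop :=
  symmetric e /\ irreflexive e.

Definition connected_graph (T : finType) (e : rel T) : Prop :=
  forall x y : T, connect e x y.

Definition acyclic_graph (T : finType) (e : rel T) : Prop :=
  forall (x : T) (p : seq T), path e x p -> uniq (x :: p) -> 2 <= size p ->
    ~~ e (last x p) x.

Definition is_tree (T : finType) (e : rel T) : Prop :=
  simple_graph e /\ connected_graph e /\ acyclic_graph e.

Definition isomorphic_to (T : finType) (e : rel T) (n : nat) (f : rel 'I_n) : Prop :=
  exists g : T -> 'I_n, bijective g /\ forall x y, e x y = f (g x) (g y).

Definition star_rel (n : nat) : rel 'I_n :=
  fun i j => (i != j) && ((val i == 0) || (val j == 0)).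

Definition path_rel (n : nat) : rel 'I_n :=
  fun i j => (val i == (val j).+1) || (val j == (val i).+1).

(* E(X,Y): edges with one endpoint in X and the other in Y (X, Y disjoint),
   encoded as ordered pairs (x, y) with x in X, y in Y. *)
Definition cross_edges (T : finType) (e : rel T) (X Y : {set T}) : {set T * T} :=
  [set xy | (xy.1 \in X) && (xy.2 \in Y) && e xy.1 xy.2].

Definition odd_pair (T : finType) (e : rel T) (X Y : {set T}) : bool :=
  [&& #|X| == 2, #|Y| == 2, [disjoint X & Y] & odd #|cross_edges e X Y|].

Definition odd_set (T : finType) (e : rel T) (X : {set T}) : bool :=
  [exists Y : {set T}, odd_pair e X Y].

(* Number of edges of Lambda(G): number of 2-subsets that are odd sets. *)
Definition lambda_edges (T : finType) (e : rel T) : nat :=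
  #|[set X : {set T} | (#|X| == 2) && odd_set e X]|.

Definition is_leaf (T : finType) (e : rel T) (u : T) : bool :=
  #|[set v | e u v]| == 1.

Definition Dleaf (T : finType) (e : rel T) : nat :=
  \max_(w : T) #|[set u | e w u && is_leaf e u]|.

(* For a vertex u, the set {u, v} is odd unless the parity of e u w + e v w is
   the same for all w outside {u, v}, i.e. unless u and v are twins (same
   neighbours outside {u, v}) or antitwins (complementary ones).  In a tree,
   twins are two leaves hanging from a common vertex.  If v is an antitwin of
   u, then u and v are joined by a path of length 1 or 3 and all other
   vertices are leaves attached to u or v; a second antitwin, or an antitwin
   together with a twin, makes the tree a star, and if no vertex carries two
   leaves the tree is P4, P5 or P6.  So u has fewer than D(T) non-neighbours
   in Lambda(T), its degree there is at least n - D(T), and summing over u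
   gives 2 |E(Lambda(T))| >= n (n - D(T)). *)

From mathcomp Require Import all_boot.
From mathcomp Require Import perm zify.
Set Implicit Arguments. Unset Strict Implicit. Unset Printing Implicit Defensive.

Ltac distinct := rewrite /= ?inE ?negb_or;
  repeat match goal with |- is_true (_ && _) => apply/andP; split end;
  try by [| rewrite eq_sym].

Lemma exists_notin (T : finType) (A : {pred T}) : #|A| < #|T| -> exists w, w \notin A.
Proof.
move=> lt_A; apply/existsP; rewrite -negb_forall; apply: contraTN lt_A => /forallP all_in.
by rewrite -leqNgt; apply/subset_leq_card/subsetP => w _; apply: all_in.
Qed.

Lemma isomorphic_card (T : finType) (e : rel T) n (f : rel 'I_n) :
  isomorphic_to e f -> #|T| = n.
Proof. by case=> g [/bij_eq_card -> _]; rewrite card_ord. Qed.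

Section Tree.
Variables (T : finType) (e : rel T).
Hypotheses (esym : symmetric e) (eirr : irreflexive e).
Hypotheses (econ : connected_graph e) (eacy : acyclic_graph e).

Lemma adj_neq x y : e x y -> x != y.
Proof. by apply: contraTneq => ->; rewrite eirr. Qed.

Lemma connect_cut (S : {set T}) x y : x \in S -> y \notin S ->
  exists a b, [/\ a \in S, b \notin S & e a b].
Proof.
move=> xS; have /connectP [p pth ->] := econ x y.
elim: p x xS pth => [|z p IH] x xS /=; first by rewrite xS.
case/andP=> exz pth; case zS: (z \in S); first exact: IH.
by exists x, z; rewrite xS zS.
Qed.

Lemma no_triangle a b c : e a b -> e b c -> ~~ e c a.
Proof.
move=> ab bc; apply/negP => ca.
have := adj_neq ab; have := adj_neq bc; have := adj_neq ca => ca' bc' ab'.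
suff uq : uniq [:: a; b; c].
  by have /(_ _ uq) := eacy (x := a) (p := [:: b; c]); rewrite /= ab bc ca => /(_ isT isT).
by distinct.
Qed.

Lemma no_square a b c d : a != c -> b != d -> e a b -> e b c -> e c d -> ~~ e d a.
Proof.
move=> ac bd ab bc cd; apply/negP => da.
have := adj_neq ab; have := adj_neq bc; have := adj_neq cd; have := adj_neq da.
move=> da' cd' bc' ab'; suff uq : uniq [:: a; b; c; d].
  have /(_ _ uq) := eacy (x := a) (p := [:: b; c; d]).
  by rewrite /= ab bc cd da => /(_ isT isT).
by distinct.
Qed.

Lemma path_head_nadj x y p w : path e x (y :: p) -> uniq [:: x, y & p] ->
  w \in p -> ~~ e x w.
Proof.
move=> + + wp; case/splitPr: wp => p1 p2 pth uq.
have {}uq : uniq [:: x, y & rcons p1 w].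
  by apply: (prefix_uniq _ uq); rewrite -cat_rcons !prefix_cons !eqxx prefix_prefix.
move: pth; rewrite -cat_cons cat_path => /andP [pth1 /= /andP [lw _]].
have := eacy (x := x) (p := y :: rcons p1 w); rewrite -rcons_cons rcons_path pth1 lw.
by rewrite last_rcons esym size_rcons; apply.
Qed.

Lemma path_adj_index x p y z : path e x p -> uniq (x :: p) ->
  y \in x :: p -> z \in x :: p -> e y z ->
  (index z (x :: p) == (index y (x :: p)).+1) || (index y (x :: p) == (index z (x :: p)).+1).
Proof.
elim: p x y z => [|x' p IH] x y z.
  by move=> _ _; rewrite !inE => /eqP -> /eqP ->; rewrite eirr.
move=> pth uq; have head_nbr w : w \in x' :: p -> e x w -> w = x'.
  rewrite inE => /predU1P [//|wp] xw.
  by have := path_head_nadj pth uq wp; rewrite xw.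
have [x_notin uq'] := andP uq; have [_ pth'] := andP pth.
have x_neq : x != x' by apply: contraNneq x_notin => ->; rewrite mem_head.
have idx_x : index x [:: x, x' & p] = 0 by rewrite /= eqxx.
have idx_x' : index x' [:: x, x' & p] = 1 by rewrite /= eqxx (negbTE x_neq).
have idx_tail w : w \in x' :: p -> index w [:: x, x' & p] = (index w (x' :: p)).+1.
  by move=> win; rewrite /= eq_sym (negbTE (memPn x_notin w win)).
rewrite [y \in _]in_cons [z \in _]in_cons => /predU1P [->|yin] /predU1P [->|zin] yz.
- by rewrite eirr in yz.
- by rewrite (head_nbr z zin yz) idx_x idx_x'.
- by rewrite esym in yz; rewrite (head_nbr y yin yz) idx_x idx_x' orbT.
- by rewrite !idx_tail // !eqSS; apply: IH.
Qed.

Lemma hamiltonian_path_iso x p : path e x p -> uniq (x :: p) ->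
  (forall w, w \in x :: p) -> isomorphic_to e (@path_rel (size (x :: p))).
Proof.
set s := x :: p => pth uq cover.
have idx_lt w : index w s < size s by rewrite index_mem.
have consec y z : index z s = (index y s).+1 -> e y z.
  move=> idx_z; have := idx_lt z; rewrite idx_z ltnS => lt_y.
  have := pathP x pth _ lt_y; rewrite -/s nth_index //.
  by rewrite -[nth x p _]/(nth x s (index y s).+1) -idx_z nth_index.
exists (fun w => Ordinal (idx_lt w)); split.
  exists (fun i : 'I_(size s) => nth x s i) => [w|i]; first exact: nth_index.
  by apply: val_inj; exact: index_uniq.
move=> y z; rewrite /path_rel /=; apply/idP/idP => [yz|].
  by rewrite orbC path_adj_index.
by case/orP => /eqP idx; [rewrite esym|]; apply: consec.
Qed.

Definition universal c := forall w, w != c -> e c w.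

Lemma universal_adj c : universal c ->
  forall x y, e x y = (x != y) && ((x == c) || (y == c)).
Proof.
move=> hc x y; case: (eqVneq x c) => [->|xc]; case: (eqVneq y c) => [->|yc].
- by rewrite eirr.
- by rewrite hc // eq_sym yc.
- by rewrite esym hc // xc.
- by rewrite andbF; apply/negbTE/(no_triangle (b := c)); [rewrite esym|]; exact: hc.
Qed.

Lemma universal_star_iso c : universal c -> isomorphic_to e (@star_rel #|T|).
Proof.
move=> hc; have n_gt0 : 0 < #|T| by apply/card_gt0P; exists c.
pose g := tperm (enum_rank c) (Ordinal n_gt0) \o enum_rank.
have g_inj : injective g by apply: inj_comp; [exact: perm_inj | exact: enum_rank_inj].
have g0 z : (val (g z) == 0) = (z == c) by rewrite -(inj_eq g_inj) /g /= tpermL.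
exists g; split; first by apply: (@inj_card_bij _ _ g g_inj); rewrite card_ord.
by move=> x y; rewrite /star_rel !g0 (inj_eq g_inj) (universal_adj hc).
Qed.

Definition leaf_at w x := forall y, e x y = (y == w).

Lemma path_end_leaf x p : path e x p -> uniq (x :: p) -> 0 < size p ->
  (forall y, e (last x p) y -> y \in x :: p) -> exists w, leaf_at w (last x p).
Proof.
set s := x :: p; set z := last x p => pth uq p_gt0 nbr_in.
have idx_z : index z s = size p by rewrite /z (last_nth x) index_uniq.
have idx_nbr y : e z y -> index y s = (size p).-1.
  move=> zy; have := path_adj_index pth uq (mem_last x p) (nbr_in y zy) zy.
  by rewrite -/s idx_z; have := index_mem y s; rewrite nbr_in //=; lia.
exists (nth x s (size p).-1) => y; apply/idP/eqP => [zy|->].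
  by rewrite -(idx_nbr y zy) nth_index // nbr_in.
have := pathP x pth (size p).-1; rewrite prednK // => /(_ (leqnn _)) /=.
by rewrite nth_last esym.
Qed.

Lemma exists_leaf : 1 < #|T| -> exists w x, leaf_at w x.
Proof.
move=> n_gt1; have /card_gt0P [x _] : 0 < #|T| by apply: ltnW.
have [y yx] : exists y, y \notin [set x] by apply: exists_notin; rewrite cards1.
have [_ [b [/set1P -> _ xb]]] := connect_cut (set11 x) yx; clear y yx.
(* Grow a path until its last vertex has no neighbour off it; k is the fuel. *)
suff grow k z p : path e z p -> uniq (z :: p) -> 0 < size p -> #|T| <= k + size p ->
    exists w x, leaf_at w x.
  by apply: (grow #|T| x [:: b]); rewrite /= ?xb ?inE ?adj_neq ?addn1.
elim: k z p => [|k IH] z p pth uq p_gt0 hk.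
  have : #|z :: p| <= #|T| by exact: max_card.
  by rewrite (card_uniqP uq) => /leq_trans/(_ hk); rewrite ltnn.
case: (pickP [pred t | e (last z p) t && (t \notin z :: p)]) => [t /andP [zt t_out]|no_out].
  apply: (IH z (rcons p t)); rewrite ?rcons_path ?pth ?zt ?size_rcons //; last by lia.
  by rewrite -rcons_cons rcons_uniq t_out uq.
have [|w leaf] := path_end_leaf pth uq p_gt0; last by exists w, (last z p).
by move=> y zy; apply: contraFT (no_out y) => y_out; rewrite /= zy y_out.
Qed.

Definition leaves_at w := [set x | e w x && is_leaf e x].

Lemma leaf_at_in w x : leaf_at w x -> x \in leaves_at w.
Proof.
move=> leaf; rewrite inE esym leaf eqxx /is_leaf.
by rewrite (_ : [set y | e x y] = [set w]) ?cards1 //; apply/setP => y; rewrite !inE leaf.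
Qed.

Lemma card_leaves_at w : #|leaves_at w| <= Dleaf e.
Proof. exact: (leq_bigmax (F := fun w => #|leaves_at w|)). Qed.

Lemma pendant_end_iso x p : path e x p -> uniq (x :: p) ->
  (forall w, w \notin x :: p -> e (last x p) w) ->
  (forall w w', w \notin x :: p -> w' \notin x :: p -> w = w') ->
  exists2 k, k <= (size p).+2 & isomorphic_to e (@path_rel k).
Proof.
move=> pth uq out_adj out_uniq.
case: (pickP [pred w | w \notin x :: p]) => [y /= y_out|no_out].
  exists (size (x :: rcons p y)); first by rewrite /= size_rcons.
  apply: hamiltonian_path_iso; first by rewrite rcons_path pth out_adj.
    by rewrite -rcons_cons rcons_uniq y_out uq.
  move=> w; rewrite -rcons_cons mem_rcons inE.
  apply/orP; have [|w_out] := boolP (w \in x :: p); first by right.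
  by left; rewrite (out_uniq w y).
exists (size (x :: p)); first by [].
by apply: hamiltonian_path_iso => // w; apply: contraFT (no_out w).
Qed.

Lemma pendant_ends_iso x p : path e x p -> uniq (x :: p) ->
  (forall w, w \notin x :: p -> e x w || e (last x p) w) ->
  (forall w w', w \notin x :: p -> w' \notin x :: p -> e x w -> e x w' -> w = w') ->
  (forall w w', w \notin x :: p -> w' \notin x :: p ->
     e (last x p) w -> e (last x p) w' -> w = w') ->
  exists2 k, k <= (size p).+3 & isomorphic_to e (@path_rel k).
Proof.
move=> pth uq out_adj x_uniq z_uniq.
case: (pickP [pred w | (w \notin x :: p) && e x w]) => [x' /= /andP [x'_out xx']|no_x].
  have out_tail w : w \notin [:: x', x & p] -> w \notin x :: p.
    by rewrite inE negb_or => /andP [].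
  have z_adj w : w \notin [:: x', x & p] -> e (last x p) w.
    move=> w_out; have := out_adj w (out_tail w w_out).
    case/orP => // /(x_uniq w x' (out_tail w w_out) x'_out)/(_ xx') wx'.
    by rewrite wx' mem_head in w_out.
  have [k k_le iso] : exists2 k, k <= (size (x :: p)).+2 & isomorphic_to e (@path_rel k).
    apply: (@pendant_end_iso x') => /=;
      [by rewrite esym xx' pth | by rewrite x'_out | exact: z_adj |].
    by move=> w w' w_out w'_out; apply: z_uniq; rewrite ?out_tail ?z_adj.
  by exists k.
have z_adj w : w \notin x :: p -> e (last x p) w.
  by move=> w_out; have := out_adj w w_out; have := no_x w; rewrite /= w_out /= => ->.
have [k k_le iso] := pendant_end_iso pth uq z_adj
  (fun w w' w_out w'_out => z_uniq w w' w_out w'_out (z_adj w w_out) (z_adj w' w'_out)).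
by exists k => //; apply: leqW.
Qed.

Lemma card_cross_edges X Y : #|cross_edges e X Y| = \sum_(x in X) \sum_(y in Y) e x y.
Proof.
rewrite pair_big /= -sum1_card big_mkcond [RHS]big_mkcond /=.
by apply: eq_bigr => -[x y] _; rewrite inE /=; case: (x \in X); case: (y \in Y).
Qed.

Lemma odd_set2 u v a b : u != v -> a != b ->
  a \notin [set u; v] -> b \notin [set u; v] ->
  e u a (+) e v a != e u b (+) e v b -> odd_set e [set u; v].
Proof.
move=> uv ab a_out b_out xor_ne; apply/existsP; exists [set a; b].
have dis : [disjoint [set u; v] & [set a; b]].
  by rewrite disjoint_sym disjoint_subset; apply/subsetP => w /set2P [] ->; rewrite inE.
rewrite /odd_pair !cards2 uv ab dis /=.
rewrite card_cross_edges big_setU1 ?inE // big_set1 !big_setU1 ?inE // !big_set1 /=.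
move: xor_ne; rewrite !oddD !oddb.
by case: (e u a); case: (e v a); case: (e u b); case: (e v b).
Qed.

Lemma not_odd_set2 u v a b : u != v -> ~~ odd_set e [set u; v] ->
  a \notin [set u; v] -> b \notin [set u; v] -> e u a (+) e v a = e u b (+) e v b.
Proof.
move=> uv not_odd a_out b_out; have [-> //|ab] := eqVneq a b.
by apply/eqP; apply: contraNT not_odd => xor_ne; apply: (odd_set2 uv ab).
Qed.

Definition twins u v := [forall w, (w \notin [set u; v]) ==> (e u w == e v w)].
Definition antitwins u v := [forall w, (w \notin [set u; v]) ==> (e v w == ~~ e u w)].

Lemma twinsP u v : reflect (forall w, w != u -> w != v -> e u w = e v w) (twins u v).
Proof.
apply: (iffP forallP) => tw w.
  by move=> wu wv; apply/eqP; move: (tw w); rewrite !inE negb_or wu wv.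
by apply/implyP; rewrite !inE negb_or => /andP [wu wv]; rewrite tw.
Qed.

Lemma antitwinsP u v :
  reflect (forall w, w != u -> w != v -> e v w = ~~ e u w) (antitwins u v).
Proof.
apply: (iffP forallP) => tw w.
  by move=> wu wv; apply/eqP; move: (tw w); rewrite !inE negb_or wu wv.
by apply/implyP; rewrite !inE negb_or => /andP [wu wv]; rewrite tw.
Qed.

Lemma antitwinsC u v : antitwins u v -> antitwins v u.
Proof. by move/antitwinsP => atw; apply/antitwinsP => w wv wu; rewrite atw ?negbK. Qed.

Lemma twins_or_antitwins u v : u != v -> ~~ odd_set e [set u; v] ->
  twins u v || antitwins u v.
Proof.
move=> uv not_odd.
case: (pickP [pred w | (w \notin [set u; v]) && (e u w != e v w)]) => [w0 /andP [w0_out]|same].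
  move=> ne0; apply/orP; right; apply/forallP => w; apply/implyP => w_out.
  have := not_odd_set2 uv not_odd w_out w0_out; move: ne0.
  by case: (e u w0); case: (e v w0); case: (e u w); case: (e v w).
apply/orP; left; apply/forallP => w; apply/implyP => w_out.
by have := same w; rewrite /= w_out => /negbFE.
Qed.

Lemma twins_leaves u v : 2 < #|T| -> u != v -> twins u v ->
  exists c, leaf_at c u /\ leaf_at c v.
Proof.
move=> n_gt2 uv /twinsP tw.
have not_uv : ~~ e u v.
  apply/negP => uv_adj.
  have [w w_out] : exists w, w \notin [set u; v] by apply: exists_notin; rewrite cards2 uv.
  have [a [b [/set2P a_uv]]] := connect_cut (set21 u v) w_out.
  rewrite !inE negb_or => /andP [bu bv] ab.
  have [ub vb] : e u b /\ e v b by case: a_uv ab => ->; rewrite -?tw // => ->; rewrite ?tw.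
  by have := no_triangle uv_adj vb; rewrite esym ub.
have v_out : v \notin [set u] by rewrite inE eq_sym.
have [_ [c [/set1P -> _ uc]]] := connect_cut (set11 u) v_out.
have cu : c != u by rewrite eq_sym adj_neq.
have cv : c != v by apply: contraNneq not_uv => <-.
have cv_adj : e c v by rewrite esym -tw.
have leaf_u : leaf_at c u.
  move=> y; apply/idP/eqP => [uy|->//]; apply/eqP; apply: contraTT uy => yc; apply/negP => uy.
  have yv : y != v by apply: contraNneq not_uv => <-.
  have cy : c != y by rewrite eq_sym.
  have vy : e v y by rewrite -tw // eq_sym adj_neq.
  by have := no_square uv cy uc cv_adj vy; rewrite esym uy.
exists c; split => // y.
case: (eqVneq y u) => [->|yu]; first by rewrite esym (negbTE not_uv) eq_sym (negbTE cu).
case: (eqVneq y v) => [->|yv]; first by rewrite eirr eq_sym (negbTE cv).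
by rewrite -tw // leaf_u.
Qed.

Lemma antitwins_pendant u v v' : u != v -> u != v' -> antitwins u v -> antitwins u v' ->
  e v v' -> forall w, e v w -> w = v'.
Proof.
move=> uv uv' /antitwinsP atw /antitwinsP atw' vv' w.
apply: contraTeq => wv'; apply/negP => vw.
have vv'_ne := adj_neq vv'; have vu : v != u by rewrite eq_sym.
have not_uv : ~~ e u v by rewrite -atw' // esym.
have wu : w != u by apply: contraNneq not_uv => <-; rewrite esym.
have wv : w != v by rewrite eq_sym adj_neq.
have not_uw : ~~ e u w by rewrite -atw.
have wv'_adj : e w v' by rewrite esym atw'.
by have := no_triangle vw wv'_adj; rewrite esym vv'.
Qed.

Lemma antitwins_universal u v v' : u != v -> u != v' -> v != v' ->
  antitwins u v -> antitwins u v' -> exists c, universal c.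
Proof.
move=> uv uv' vv' atw atw'; have /antitwinsP av := atw; have /antitwinsP av' := atw'.
have vu : v != u by rewrite eq_sym.
have v'u : v' != u by rewrite eq_sym.
have v'v : v' != v by rewrite eq_sym.
case: (boolP (e v v')) => [vv'_adj|not_vv'].
  have u_out : u \notin [set v; v'] by rewrite !inE negb_or uv uv'.
  have [a [b [/set2P a_vv' b_out ab]]] := connect_cut (set21 v v') u_out.
  move: b_out; rewrite !inE negb_or => /andP [bv bv'].
  case: a_vv' ab => -> ab.
    by rewrite (antitwins_pendant uv uv' atw atw' vv'_adj ab) eqxx in bv'.
  have v'v_adj : e v' v by rewrite esym.
  by rewrite (antitwins_pendant uv' uv atw' atw v'v_adj ab) eqxx in bv.
have uv'_adj : e u v' by rewrite -[e u v']negbK -av.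
have uv_adj : e u v by rewrite -[e u v]negbK -av' // esym.
exists u => w wu; case: (eqVneq w v) => [->//|wv]; case: (eqVneq w v') => [->//|wv'].
apply/negPn/negP => not_uw.
have vw : e v w by rewrite av // (negbTE not_uw).
have wv'_adj : e w v' by rewrite esym av' // (negbTE not_uw).
have uw : u != w by rewrite eq_sym.
by have := no_square uw vv' uv_adj vw wv'_adj; rewrite esym uv'_adj.
Qed.

Lemma antitwins_twins_universal u v v' : 2 < #|T| -> u != v' -> v != v' ->
  antitwins u v -> twins u v' -> exists c, universal c.
Proof.
move=> n_gt2 uv' vv' /antitwinsP av tw.
have [c [leaf_u leaf_v']] := twins_leaves n_gt2 uv' tw.
have v'c : v' != c by apply: adj_neq; rewrite leaf_v'.
have [v'u v'v] : v' != u /\ v' != v by rewrite !(eq_sym v').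
have v_c : v = c by apply/eqP; rewrite -leaf_v' esym av // leaf_u.
subst v; exists c => w wc.
case: (eqVneq w u) => [->|wu]; first by rewrite esym leaf_u.
by rewrite av // leaf_u.
Qed.

Lemma antitwins_adj_leaf u v x : e u v -> antitwins u v -> e u x -> x != v -> leaf_at u x.
Proof.
move=> uv_adj /antitwinsP atw ux xv y; apply/idP/eqP => [xy|->]; last by rewrite esym.
apply/eqP; apply: contraTT xy => yu; apply/negP => xy.
have xu : x != u by rewrite eq_sym adj_neq.
have not_vx : ~~ e v x by rewrite atw // ux.
have yv : y != v by apply: contraNneq not_vx => <-; rewrite esym.
have not_uy : ~~ e u y by apply: contraNN (no_triangle ux xy) => uy; rewrite esym.
have yv_adj : e y v by rewrite esym atw // (negbTE not_uy).
have uy : u != y by rewrite eq_sym.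
by have := no_square uy xv ux xy yv_adj; rewrite esym uv_adj.
Qed.

Lemma antitwins_far_leaf u v a b x : ~~ e u v -> antitwins u v ->
  e u a -> e a b -> e b v -> e u x -> x != a -> leaf_at u x.
Proof.
move=> not_uv /antitwinsP atw ua ab bv ux xa y; apply/idP/eqP => [xy|->]; last by rewrite esym.
apply/eqP; apply: contraTT xy => yu; apply/negP => xy.
have au : a != u by rewrite eq_sym adj_neq.
have av : a != v by apply: contraNneq not_uv => <-.
have bu : b != u by apply: contraNneq not_uv => <-.
have bv_ne : b != v := adj_neq bv.
have ab_ne : a != b := adj_neq ab.
have xu : x != u by rewrite eq_sym adj_neq.
have xv : x != v by apply: contraNneq not_uv => <-.
have not_vx : ~~ e v x by rewrite atw // ux.
have uv : u != v by apply: contraNneq not_vx => <-.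
have not_ub : ~~ e u b by rewrite -atw // esym.
have xb : x != b by apply: contraNneq not_ub => <-.
have yx : y != x by rewrite eq_sym adj_neq.
have yv : y != v by apply: contraNneq not_vx => <-; rewrite esym.
have not_uy : ~~ e u y by apply: contraNN (no_triangle ux xy) => uy; rewrite esym.
have yv_adj : e y v by rewrite esym atw // (negbTE not_uy).
have not_va : ~~ e v a by rewrite atw // ua.
have ya : y != a by apply: contraNneq not_va => <-; rewrite esym.
have vb : e v b by rewrite esym.
have ba : e b a by rewrite esym.
have au_adj : e a u by rewrite esym.
(* A second neighbour y of x closes the cycle u x y v b a, or u x b a if y = b. *)
case: (eqVneq y b) => [yb|yb].
  have ub : u != b by rewrite eq_sym.
  by subst y; have := no_square ub xa ux xy ba; rewrite au_adj.
have uq : uniq [:: u; x; y; v; b; a] by distinct.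
have /(_ _ uq) := eacy (x := u) (p := [:: x; y; v; b; a]).
by rewrite /= ux xy yv_adj vb ba au_adj => /(_ isT isT).
Qed.

Lemma antitwins_far_path u v : u != v -> ~~ e u v -> antitwins u v ->
  exists a b, [/\ e u a, e a b & e b v].
Proof.
move=> uv not_uv /antitwinsP atw.
have u_in : u \in [set w | (w == u) || e u w] by rewrite inE eqxx.
have v_out : v \notin [set w | (w == u) || e u w] by rewrite inE negb_or eq_sym uv.
have [a [b []]] := connect_cut u_in v_out; rewrite !inE negb_or => a_in /andP [bu not_ub] ab.
have ua : e u a by case/predU1P: a_in => // a_u; move: ab; rewrite a_u (negbTE not_ub).
have au : a != u by rewrite eq_sym adj_neq.
have av : a != v by apply: contraNneq not_uv => <-.
have bv : b != v by apply: contraTneq ab => ->; rewrite esym atw // ua.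
by exists a, b; split => //; rewrite esym atw // (negbTE not_ub).
Qed.

Lemma antitwins_spine u v : u != v -> antitwins u v ->
  exists p, [/\ path e u p, uniq (u :: p), last u p = v, size p <= 3 &
    forall x, x \notin u :: p -> (e u x -> leaf_at u x) /\ (e v x -> leaf_at v x)].
Proof.
move=> uv atw; have vu : v != u by rewrite eq_sym.
have atw' := antitwinsC atw.
case: (boolP (e u v)) => [uv_adj|not_uv].
  exists [:: v]; split => //=; rewrite ?uv_adj ?inE ?uv //.
  move=> x; rewrite !inE negb_or => /andP [xu xv]; split => [ux|vx].
    exact: antitwins_adj_leaf uv_adj atw ux xv.
  by apply: antitwins_adj_leaf atw' vx xu; rewrite esym.
have [a [b [ua ab bv]]] := antitwins_far_path uv not_uv atw.
have not_vu : ~~ e v u by rewrite esym.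
have au : a != u by rewrite eq_sym adj_neq.
have av : a != v by apply: contraNneq not_uv => <-.
have bu : b != u by apply: contraNneq not_uv => <-.
have bv_ne : b != v := adj_neq bv.
have ab_ne : a != b := adj_neq ab.
exists [:: a; b; v]; split => //=; [by rewrite ua ab bv | by distinct |].
move=> x; rewrite !inE !negb_or => /and4P [xu xa xb xv]; split => [ux|vx].
  exact: antitwins_far_leaf not_uv atw ua ab bv ux xa.
have [vb ba au_adj] : [/\ e v b, e b a & e a u] by split; rewrite esym.
exact: antitwins_far_leaf not_vu atw' vb ba au_adj vx xb.
Qed.

Definition lambda_adj u := [set v | (v != u) && odd_set e [set u; v]].
Definition lambda_nonadj u := [set v | (v != u) && ~~ odd_set e [set u; v]].

Lemma card_lambda_adj_nonadj u : #|lambda_adj u| + #|lambda_nonadj u| = #|T|.-1.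
Proof.
rewrite -(cardsC1 u) -(cardsID [set v | odd_set e [set u; v]] [set~ u]).
by congr (_ + _); apply: eq_card => v; rewrite !inE // andbC.
Qed.

Lemma sum_card_lambda_adj : \sum_u #|lambda_adj u| <= 2 * lambda_edges e.
Proof.
set E := [set X : {set T} | (#|X| == 2) && odd_set e X].
have adj_le u : #|lambda_adj u| <= #|[set X in E | u \in X]|.
  rewrite -(card_in_imset (f := fun v => [set u; v])); last first.
    move=> v v'; rewrite !inE => /andP [vu _] _ uv_eq.
    by have := set22 u v; rewrite uv_eq !inE (negbTE vu) => /eqP.
  apply/subset_leq_card/subsetP => X /imsetP [v]; rewrite !inE => /andP [vu odd_uv] ->.
  by rewrite cards2 [u == v]eq_sym vu odd_uv set21.
apply: (@leq_trans (\sum_u #|[set X in E | u \in X]|)).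
  by apply: leq_sum => u _; apply: adj_le.
have card_in u : #|[set X in E | u \in X]| = \sum_(X in E) (u \in X).
  rewrite -sum1_card big_mkcond [RHS]big_mkcond; apply: eq_bigr => X _.
  by rewrite in_set; case: (X \in E).
apply/eq_leq; under eq_bigr do rewrite card_in.
rewrite exchange_big /lambda_edges -/E mulnC -sum_nat_const.
apply: eq_bigr => X; rewrite inE => /andP [/eqP <- _].
by rewrite -sum1_card [RHS]big_mkcond.
Qed.

Section Exceptions.
Hypothesis n_ge4 : 4 <= #|T|.
Hypothesis not_P4 : ~ isomorphic_to e (@path_rel 4).
Hypothesis not_P5 : ~ isomorphic_to e (@path_rel 5).
Hypothesis not_P6 : ~ isomorphic_to e (@path_rel 6).
Hypothesis not_star : ~ isomorphic_to e (@star_rel #|T|).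

Lemma no_short_path_iso k : k <= 6 -> ~ isomorphic_to e (@path_rel k).
Proof.
move=> k_le6 iso; have : k \in [:: 4; 5; 6] by have := isomorphic_card iso; rewrite !inE; lia.
by rewrite !inE => /or3P [] /eqP k_val; rewrite k_val in iso.
Qed.

Lemma antitwins_Dleaf_gt1 u v : u != v -> antitwins u v -> 1 < Dleaf e.
Proof.
move=> uv atw; rewrite ltnNge; apply/negP => D_le1.
have leaf_uniq w x y : leaf_at w x -> leaf_at w y -> x = y.
  move=> /leaf_at_in x_in /leaf_at_in y_in.
  exact: (card_le1_eqP (leq_trans (card_leaves_at w) D_le1)).
have [p [pth uq p_last p_le3 out_leaf]] := antitwins_spine uv atw.
have [k k_le iso] : exists2 k, k <= (size p).+3 & isomorphic_to e (@path_rel k).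
  apply: (@pendant_ends_iso u p); rewrite ?p_last //.
  - move=> w w_out; have wu : w != u by apply: contraNneq w_out => ->; rewrite mem_head.
    have wv : w != v by apply: contraNneq w_out => ->; rewrite -p_last mem_last.
    by have /antitwinsP -> := atw; rewrite ?orbN.
  - by move=> w w' /out_leaf [uw _] /out_leaf [uw' _] /uw + /uw'; apply: leaf_uniq.
  - by move=> w w' /out_leaf [_ vw] /out_leaf [_ vw'] /vw + /vw'; apply: leaf_uniq.
by apply: (no_short_path_iso (k := k)) iso; lia.
Qed.

Lemma antitwins_nonadj u v : u != v -> antitwins u v -> lambda_nonadj u \subset [set v].
Proof.
move=> uv atw; apply/subsetP => v'; rewrite !inE => /andP [v'u not_odd].
case: (eqVneq v' v) => // v'v; exfalso; apply: not_star.
have uv' : u != v' by rewrite eq_sym.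
have vv' : v != v' by rewrite eq_sym.
have [c center] : exists c, universal c.
  case/orP: (twins_or_antitwins uv' not_odd) => [tw|atw'].
    exact: antitwins_twins_universal (leq_trans _ n_ge4) uv' vv' atw tw.
  exact: antitwins_universal uv uv' vv' atw atw'.
exact: universal_star_iso center.
Qed.

Lemma card_lambda_nonadj_lt u : #|lambda_nonadj u| < Dleaf e.
Proof.
have n_gt2 : 2 < #|T| by apply: leq_trans n_ge4.
case: (pickP [pred v | (v != u) && antitwins u v]) => [v /andP [vu atw]|no_atw].
  have uv : u != v by rewrite eq_sym.
  apply: leq_ltn_trans (subset_leq_card (antitwins_nonadj uv atw)) _.
  by rewrite cards1 (antitwins_Dleaf_gt1 uv atw).
have nonadj_twins v : v \in lambda_nonadj u -> u != v /\ twins u v.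
  rewrite inE => /andP [vu not_odd]; have uv : u != v by rewrite eq_sym.
  split => //; have := twins_or_antitwins uv not_odd.
  by have := no_atw v; rewrite /= vu /= => ->; rewrite orbF.
have [->|[v0 /nonadj_twins [uv0 tw0]]] := set_0Vmem (lambda_nonadj u).
  have [w [x /leaf_at_in x_in]] := exists_leaf (ltnW n_gt2).
  by rewrite cards0; apply: leq_trans (card_leaves_at w); apply/card_gt0P; exists x.
have [c [leaf_u _]] := twins_leaves n_gt2 uv0 tw0.
have sub : lambda_nonadj u \subset leaves_at c :\ u.
  apply/subsetP => v v_in; have [uv tw] := nonadj_twins v v_in.
  have [c' [leaf_u' leaf_v]] := twins_leaves n_gt2 uv tw.
  have c'c : c' = c by apply/eqP; rewrite -leaf_u leaf_u'.
  by rewrite in_setD1 eq_sym uv -c'c leaf_at_in.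
apply: leq_ltn_trans (subset_leq_card sub) _.
by have := card_leaves_at c; rewrite (cardsD1 u) (leaf_at_in leaf_u) add1n.
Qed.

End Exceptions.

End Tree.

Theorem lemma2 (T : finType) (e : rel T) :
  is_tree e ->
  4 <= #|T| ->
  ~ isomorphic_to e (@star_rel #|T|) ->
  ~ isomorphic_to e (@path_rel 4) ->
  ~ isomorphic_to e (@path_rel 5) ->
  ~ isomorphic_to e (@path_rel 6) ->
  #|T| * (#|T| - Dleaf e) <= 2 * lambda_edges e.
Proof.
move=> [[esym eirr] [econ eacy]] n_ge4 not_star not_P4 not_P5 not_P6.
apply: leq_trans (sum_card_lambda_adj e).
rewrite -sum_nat_const leq_sum // => u _.
have := card_lambda_nonadj_lt esym eirr econ eacy n_ge4 not_P4 not_P5 not_P6 not_star u.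
by have := card_lambda_adj_nonadj e u; lia.
Qed.
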